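(* Let $U\subset\mathbb{R}^k$ be open and let $(\mathcal{D}_x)_{x\in U}$ be a modulated Dirac structure with $\mathcal{D}_x\subset\mathbb{R}^n\times\mathbb{R}^n$ for all $x\in U$. Let $E:U\to\mathbb{R}^{\ell\times n}$ be continuous and assume that the dimension of the space $\mathcal{D}_x\cap(\mathbb{R}^n\times\ker E(x))$ is independent of $x\in U$. For $x\in U$ define $\widetilde{\mathcal{D}}_x:=\{(f,e)\in\mathbb{R}^n\times\mathbb{R}^n:\ E(x)e=0,\ \exists\,\mu\in\mathbb{R}^\ell:\ (f+E(x)^\top\mu,e)\in\mathcal{D}_x\}$. Then $(\widetilde{\mathcal{D}}_x)_{x\in U}$ is a modulated Dirac structure.
   Context: A subspace $\mathcal{D}\subset\mathbb{R}^n\times\mathbb{R}^n$ is a Dirac structure if for all $f,e\in\mathbb{R}^n$: $(f,e)\in\mathcal{D}$ if and only if $\hat f^\top e+f^\top\hat e=0$ for all $(\hat f,\hat e)\in\mathcal{D}$. For $U\subset\mathbb{R}^k$ open, a family $(\mathcal{D}_x)_{x\in U}$ of subspaces of $\mathbb{R}^n\times\mathbb{R}^n$ is a modulated Dirac structure if for every $x\in U$: (a) $\mathcal{D}_x$ is a Dirac structure, and (b) there exist a neighborhood $U_x\subset U$ of $x$ and a family $(T_y)_{y\in U_x}$ of linear bijective maps $T_y:\mathbb{R}^n\to\mathcal{D}_y$ such that for every $z\in\mathbb{R}^n$ the map $y\mapsto T_yz$ from $U_x$ to $\mathbb{R}^n\times\mathbb{R}^n$ is continuous. *)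

From HB Require Import structures.
From mathcomp Require Import all_boot all_order all_algebra.
From mathcomp Require Import all_classical all_reals all_analysis.
Set Implicit Arguments. Unset Strict Implicit. Unset Printing Implicit Defensive.
Import Order.TTheory GRing.Theory Num.Theory.
Import numFieldNormedType.Exports.
Local Open Scope classical_set_scope.
Local Open Scope ring_scope.

Definition dot (R : realType) (n : nat) (u v : 'rV[R]_n) : R := (u *m v^T) 0 0.

Definition is_subspace (R : realType) (n : nat) (S : set ('rV[R]_n * 'rV[R]_n)) :=
  S (0, 0) /\
  (forall p q, S p -> S q -> S (p.1 + q.1, p.2 + q.2)) /\
  (forall (a : R) p, S p -> S (a *: p.1, a *: p.2)).

Definition dirac (R : realType) (n : nat) (D : set ('rV[R]_n * 'rV[R]_n)) :=
  is_subspace D /\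
  forall f e, D (f, e) <->
    (forall f' e', D (f', e') -> dot f' e + dot f e' = 0).

Definition lin_bij_onto (R : realType) (m n : nat)
    (L : 'rV[R]_m -> 'rV[R]_n * 'rV[R]_n) (S : set ('rV[R]_n * 'rV[R]_n)) :=
  (forall (a : R) (z w : 'rV[R]_m),
      L (a *: z + w) = ((a *: (L z).1 + (L w).1), (a *: (L z).2 + (L w).2))) /\
  injective L /\
  (forall p, S p <-> exists z, L z = p).

Definition has_dim (R : realType) (n : nat) (S : set ('rV[R]_n * 'rV[R]_n)) (d : nat) :=
  is_subspace S /\ exists L : 'rV[R]_d -> 'rV[R]_n * 'rV[R]_n, lin_bij_onto L S.

Definition modulated_dirac (R : realType) (k n : nat) (U : set 'rV[R]_k)
    (D : 'rV[R]_k -> set ('rV[R]_n * 'rV[R]_n)) :=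
  forall x, U x ->
    dirac (D x) /\
    exists Ux : set 'rV[R]_k, [/\ nbhs x Ux, Ux `<=` U &
      exists T : 'rV[R]_k -> 'rV[R]_n -> 'rV[R]_n * 'rV[R]_n,
        (forall y, Ux y -> lin_bij_onto (T y) (D y)) /\
        (forall z : 'rV[R]_n, {within Ux, continuous (fun y => T y z)})].

Definition in_kerE (R : realType) (l n : nat) (E : 'M[R]_(l, n)) (e : 'rV[R]_n) :=
  E *m e^T = 0.

Definition reduced_dirac (R : realType) (k l n : nat)
    (D : 'rV[R]_k -> set ('rV[R]_n * 'rV[R]_n)) (E : 'rV[R]_k -> 'M[R]_(l, n))
    (x : 'rV[R]_k) : set ('rV[R]_n * 'rV[R]_n) :=
  fun p => in_kerE (E x) p.2 /\ exists mu : 'rV[R]_l, D x (p.1 + mu *m E x, p.2).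

(* Near x, D_y is the row space of [F y | G y] for matrices F, G that depend
   continuously on y (read off from the frame T_y), and the Dirac property of
   D_y amounts to F G^T + G F^T = 0 together with maximality.  If the rows of
   Z span the left kernel of N = G E^T, the reduced space is the row space of
   [Z F | Z G] stacked over [E | 0]; it is again isotropic and maximal, hence
   Dirac, and this spanning matrix has rank n.  The dimension hypothesis makes
   the rank of N constant, so an invertible maximal minor of N at x stays
   invertible nearby and Cramer's rule yields such a Z depending continuously
   on y.  Likewise an invertible n x n minor of the reduced spanning matrix at
   x selects n rows that form a continuous frame near x. *)

From HB Require Import structures.
From mathcomp Require Import all_boot all_order all_algebra.
From mathcomp Require Import all_classical all_reals all_analysis.
From mathcomp Require Import zify.
(* Imported last so that [dirac] denotes the Dirac structures of [Defs] and
   not the Dirac measure of mathcomp-analysis. *)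
From Pilot Require Import Defs.
Set Implicit Arguments. Unset Strict Implicit. Unset Printing Implicit Defensive.
Import Order.TTheory GRing.Theory Num.Theory.
Import numFieldNormedType.Exports.
Local Open Scope classical_set_scope.
Local Open Scope ring_scope.

Section Isotropic.
Variable K : fieldType.

Lemma mxrank_row_mxC m n (M1 M2 : 'M[K]_(m, n)) :
  \rank (row_mx M2 M1) = \rank (row_mx M1 M2).
Proof.
by rewrite -mxrank_tr tr_row_mx -[in RHS]mxrank_tr tr_row_mx -!addsmxE addsmxC.
Qed.

Lemma isotropic_rank_le m n (M1 M2 : 'M[K]_(m, n)) :
  M1 *m M2^T + M2 *m M1^T = 0 -> (\rank (row_mx M1 M2) <= n)%N.
Proof.
move=> iso.
have : (row_mx M1 M2 <= kermx (row_mx M2 M1)^T)%MS.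
  by apply/sub_kermxP; rewrite tr_row_mx mul_row_col.
move/mxrankS; rewrite mxrank_ker mxrank_tr mxrank_row_mxC.
have := rank_leq_col (row_mx M1 M2); lia.
Qed.

Lemma lagrangian_rank m n (M1 M2 : 'M[K]_(m, n)) :
  M1 *m M2^T + M2 *m M1^T = 0 ->
  (forall f e : 'rV_n, f *m M2^T + e *m M1^T = 0 ->
     exists w : 'rV_m, f = w *m M1 /\ e = w *m M2) ->
  \rank (row_mx M1 M2) = n.
Proof.
move=> iso Hmax.
have : (kermx (row_mx M2 M1)^T <= row_mx M1 M2)%MS.
  apply/row_subP => i.
  have : row i (kermx (row_mx M2 M1)^T) *m (row_mx M2 M1)^T = 0.
    by rewrite -row_mul mulmx_ker row0.
  rewrite -[row i _]hsubmxK tr_row_mx mul_row_col => /Hmax [w [-> ->]].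
  by rewrite -mul_mx_row submxMl.
move/mxrankS; rewrite mxrank_ker mxrank_tr mxrank_row_mxC.
have := isotropic_rank_le iso; lia.
Qed.

End Isotropic.

Section Minors.
Variable K : fieldType.

Lemma mxrank_minor m p r (M : 'M[K]_(m, p)) : \rank M = r ->
  exists (f : 'I_r -> 'I_m) (g : 'I_r -> 'I_p), \det (mxsub f g M) != 0.
Proof.
move=> <-; set f := maxrankfun M.
have ff : row_full (rowsub f M)^T.
  by rewrite /row_full mxrank_tr; exact: maxrowsub_free.
exists f, (fullrankfun ff); rewrite -unitfE -unitmxE.
have -> : mxsub f (fullrankfun ff) M = (rowsub (fullrankfun ff) (rowsub f M)^T)^T.
  by apply/matrixP => i j; rewrite !mxE.
by rewrite unitmx_tr fullrowsub_unit.
Qed.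

Lemma minor_row_free m p r (f : 'I_r -> 'I_m) (g : 'I_r -> 'I_p) (M : 'M[K]_(m, p)) :
  \det (mxsub f g M) != 0 -> row_free (rowsub f M).
Proof.
rewrite -unitfE -unitmxE => /mxrank_unit rk.
have : (\rank (mxsub f g M) <= \rank (rowsub f M))%N.
  have -> : mxsub f g M = rowsub f M *m colsub g 1%:M.
    by rewrite mulmx_colsub mulmx1; apply/matrixP => i j; rewrite !mxE.
  exact: mxrankM_maxl.
by rewrite rk /row_free => h; rewrite eqn_leq h rank_leq_row.
Qed.

Lemma minor_row_span m p r (f : 'I_r -> 'I_m) (g : 'I_r -> 'I_p) (M : 'M[K]_(m, p)) :
  \det (mxsub f g M) != 0 -> (\rank M <= r)%N -> (M <= rowsub f M)%MS.
Proof.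
move=> /minor_row_free /eqP free_f rM.
have sub : (rowsub f M <= M)%MS by rewrite rowsubE submxMl.
by rewrite -(mxrank_leqif_sup sub).2 eqn_leq mxrankS //= free_f.
Qed.

Section MinorCokernel.
Variables (m l r : nat) (N : 'M[K]_(m, l)) (f : 'I_r -> 'I_m) (g : 'I_r -> 'I_l).
Let A := mxsub f g N.

(* Cramer's rule; unlike [kermx N], this is polynomial in the entries of [N]. *)
Definition minor_coker := \det A *: 1%:M - colsub g N *m \adj A *m rowsub f 1%:M.

Lemma minor_coker_eqmx : \det A != 0 -> (\rank N <= r)%N ->
  (minor_coker == kermx N)%MS.
Proof.
move=> dA rN; apply/andP; split.
  apply/sub_kermxP; have /submxP [C NC] := minor_row_span dA rN.
  have colNC : colsub g N = C *m A.
    by rewrite {1}NC -mulmx_colsub; congr (_ *m _); apply/matrixP => i j; rewrite !mxE.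
  rewrite mulmxBl colNC -!mulmxA (mulmxA A) mul_mx_adj -rowsubE mul_scalar_mx.
  by rewrite -scalemxAl -scalemxAr -NC mul1mx subrr.
apply/submxP; exists ((\det A)^-1 *: kermx N).
rewrite mulmxBr -!scalemxAl !mulmxA mulmx_colsub mulmx_ker.
have -> : colsub g (0 : 'M[K]_(m, l)) = 0 by apply/matrixP => i j; rewrite !mxE.
by rewrite !mul0mx scaler0 subr0 -scalemxAr mulmx1 scalerA mulVf // scale1r.
Qed.

End MinorCokernel.
End Minors.

Section PairLinear.
Variable R : realType.

Definition pair_linear m n (L : 'rV[R]_m -> 'rV[R]_n * 'rV[R]_n) :=
  forall (a : R) (z w : 'rV[R]_m),
    L (a *: z + w) = (a *: (L z).1 + (L w).1, a *: (L z).2 + (L w).2).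

Definition mx_fst m n (L : 'rV[R]_m -> 'rV[R]_n * 'rV[R]_n) : 'M[R]_(m, n) :=
  \matrix_i (L (delta_mx 0 i)).1.
Definition mx_snd m n (L : 'rV[R]_m -> 'rV[R]_n * 'rV[R]_n) : 'M[R]_(m, n) :=
  \matrix_i (L (delta_mx 0 i)).2.

Definition spanned_by m n (S : set ('rV[R]_n * 'rV[R]_n)) (F G : 'M[R]_(m, n)) :=
  forall p, S p <-> exists z : 'rV_m, p = (z *m F, z *m G).

Lemma pair_linear0 m n (L : 'rV[R]_m -> 'rV[R]_n * 'rV[R]_n) :
  pair_linear L -> L 0 = (0, 0).
Proof.
move=> linL; have := linL 1 0 0; rewrite scale1r addr0 !scale1r.
case: (L 0) => a b /= [Ea Eb].
by congr pair;
  [apply: (addIr a); rewrite add0r -Ea | apply: (addIr b); rewrite add0r -Eb].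
Qed.

Lemma pair_linear_mxE m n (L : 'rV[R]_m -> 'rV[R]_n * 'rV[R]_n) :
  pair_linear L -> forall z, L z = (z *m mx_fst L, z *m mx_snd L).
Proof.
move=> linL.
have Lsum (s : seq 'I_m) (c : 'I_m -> R) :
    L (\sum_(i <- s) c i *: delta_mx 0 i) =
    (\sum_(i <- s) c i *: (L (delta_mx 0 i)).1,
     \sum_(i <- s) c i *: (L (delta_mx 0 i)).2).
  elim: s => [|i s IH]; first by rewrite !big_nil pair_linear0.
  by rewrite !big_cons linL IH.
move=> z; rewrite {1}(row_sum_delta z) Lsum; congr pair; rewrite mulmx_sum_row;
  by apply: eq_bigr => i _; rewrite rowK.
Qed.

Lemma lin_bij_onto_mx m n (L : 'rV[R]_m -> 'rV[R]_n * 'rV[R]_n) S :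
  lin_bij_onto L S ->
  spanned_by S (mx_fst L) (mx_snd L) /\ row_free (row_mx (mx_fst L) (mx_snd L)).
Proof.
move=> [linL [injL ontoL]]; have LE := pair_linear_mxE linL; split.
  move=> p; rewrite ontoL.
  by split=> -[z Ez]; exists z; rewrite -?Ez LE // Ez.
rewrite -kermx_eq0; apply/eqP/row_matrixP => i; rewrite row0; apply: injL.
have : row i (kermx (row_mx (mx_fst L) (mx_snd L))) *m row_mx (mx_fst L) (mx_snd L) = 0.
  by rewrite -row_mul mulmx_ker row0.
by rewrite pair_linear0 // LE mul_mx_row -row_mx0 => /eq_row_mx [-> ->].
Qed.

End PairLinear.

Lemma mul_trmx_mulmx (K : comRingType) p m n l (X : 'M[K]_(p, m))
    (G : 'M[K]_(m, n)) (E : 'M[K]_(l, n)) :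
  E *m (X *m G)^T = (X *m (G *m E^T))^T.
Proof. by rewrite mulmxA [RHS]trmx_mul trmxK. Qed.

Section DiracMatrix.
Variable R : realType.

Lemma dotC n (u v : 'rV[R]_n) : dot u v = dot v u.
Proof.
rewrite /dot; have -> : (u *m v^T) 0 0 = (u *m v^T)^T 0 0 by rewrite [RHS]mxE.
by rewrite trmx_mul trmxK.
Qed.

Lemma dot_spanned m n (F G : 'M[R]_(m, n)) (z : 'rV_m) (f e : 'rV_n) :
  dot (z *m F) e + dot f (z *m G) = ((f *m G^T + e *m F^T) *m z^T) 0 0.
Proof.
by rewrite dotC /dot !trmx_mul !mulmxA mulmxDl [in RHS]mxE addrC.
Qed.

Lemma mulmx_trdelta n (v : 'rV[R]_n) i : (v *m (delta_mx (0 : 'I_1) i)^T) 0 0 = v 0 i.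
Proof. by rewrite trmx_delta -colE mxE. Qed.

Lemma dirac_isotropic m n S (F G : 'M[R]_(m, n)) :
  spanned_by S F G -> dirac S -> F *m G^T + G *m F^T = 0.
Proof.
move=> SFG [_ HS]; apply/matrixP => i j.
have S_row k : S (delta_mx 0 k *m F, delta_mx 0 k *m G).
  by apply/SFG; exists (delta_mx 0 k).
have := (HS _ _).1 (S_row i) _ _ (S_row j).
by rewrite dot_spanned -!mulmxA -mulmxDr mulmx_trdelta -rowE !mxE.
Qed.

Lemma spanned_dirac m n S (F G : 'M[R]_(m, n)) :
  spanned_by S F G -> F *m G^T + G *m F^T = 0 ->
  (forall f e, f *m G^T + e *m F^T = 0 -> S (f, e)) -> dirac S.
Proof.
move=> SFG iso Smax; split.
  split; first by apply/SFG; exists 0; rewrite !mul0mx.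
  split=> [p q /SFG [z ->] /SFG [w ->]|a p /SFG [z ->]]; apply/SFG.
    by exists (z + w); rewrite !mulmxDl.
  by exists (a *: z); rewrite !scalemxAl.
move=> f e; split.
  move=> /SFG [w [-> ->]] f' e' /SFG [z [-> ->]].
  by rewrite dot_spanned -!mulmxA -mulmxDr iso !(mulmx0, mul0mx) mxE.
move=> He; apply/Smax/rowP => i.
have := He _ _ (proj2 (SFG _) (ex_intro _ (delta_mx 0 i) erefl)).
by rewrite dot_spanned mulmx_trdelta !mxE.
Qed.

Lemma dirac_max m n S (F G : 'M[R]_(m, n)) f e :
  spanned_by S F G -> dirac S -> f *m G^T + e *m F^T = 0 -> S (f, e).
Proof.
move=> SFG [_ HS] fe0; apply/HS => _ _ /SFG [z [-> ->]].
by rewrite dot_spanned fe0 mul0mx mxE.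
Qed.

Lemma in_kerE_mul m n l (G : 'M[R]_(m, n)) (E : 'M[R]_(l, n)) (z : 'rV_m) :
  in_kerE E (z *m G) <-> z *m (G *m E^T) = 0.
Proof.
rewrite /in_kerE mul_trmx_mulmx.
by split=> [/eqP|->]; [rewrite trmx_eq0 => /eqP | exact: trmx0].
Qed.

End DiracMatrix.

Section Parametrisations.
Variable R : realType.

Lemma has_dim_kerE m n l d S (F G : 'M[R]_(m, n)) (E : 'M[R]_(l, n)) :
  spanned_by S F G -> row_free (row_mx F G) ->
  has_dim (S `&` [set p | in_kerE E p.2]) d -> \rank (G *m E^T) = (m - d)%N.
Proof.
move=> SFG freeFG [_ [L /lin_bij_onto_mx [SL freeL]]].
set N := G *m E^T; set P := row_mx (mx_fst L) (mx_snd L).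
have SN p : (S `&` [set p | in_kerE E p.2]) p <->
    exists2 z : 'rV_m, p = (z *m F, z *m G) & z *m N = 0.
  split=> [[/SFG [z ->] /in_kerE_mul zN] | [z -> /in_kerE_mul zN]]; first by exists z.
  by split=> //; apply/SFG; exists z.
have sub_ker : (P <= kermx N *m row_mx F G)%MS.
  apply/row_subP => i.
  have /SN [z [E1 E2] zN] : (S `&` [set p | in_kerE E p.2])
      (delta_mx 0 i *m mx_fst L, delta_mx 0 i *m mx_snd L).
    by apply/SL; eexists.
  by rewrite rowE mul_mx_row E1 E2 -mul_mx_row submxMr //; apply/sub_kermxP.
have ker_sub : (kermx N *m row_mx F G <= P)%MS.
  apply/row_subP => i; rewrite row_mul.
  have kN : row i (kermx N) *m N = 0 by rewrite -row_mul mulmx_ker row0.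
  have /SL [u [E1 E2]] : (S `&` [set p | in_kerE E p.2])
      (row i (kermx N) *m F, row i (kermx N) *m G).
    by apply/SN; exists (row i (kermx N)).
  by rewrite mul_mx_row E1 E2 -mul_mx_row submxMl.
have := mxrankS sub_ker; have := mxrankS ker_sub.
rewrite mxrankMfree // mxrank_ker (eqP freeL); have := rank_leq_row N; lia.
Qed.

Lemma minor_lin_bij_onto m n r S (F G : 'M[R]_(m, n))
    (h : 'I_r -> 'I_m) (c : 'I_r -> 'I_(n + n)) :
  spanned_by S F G -> (\rank (row_mx F G) <= r)%N ->
  \det (mxsub h c (row_mx F G)) != 0 ->
  lin_bij_onto (fun z : 'rV_r => (z *m rowsub h F, z *m rowsub h G)) S.
Proof.
move=> SFG rFG minor_h.
have rowsubFG : rowsub h (row_mx F G) = row_mx (rowsub h F) (rowsub h G).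
  by rewrite rowsubE mul_mx_row -!rowsubE.
have span_h := minor_row_span minor_h rFG; have free_h := minor_row_free minor_h.
rewrite rowsubFG in span_h free_h.
split; first by move=> a z w; rewrite !mulmxDl !scalemxAl.
split=> [z1 z2 [E1 E2]|p].
  by apply: (row_free_inj free_h); rewrite !mul_mx_row E1 E2.
split=> [/SFG [w ->]|[z <-]]; last first.
  by apply/SFG; exists (z *m rowsub h 1%:M); rewrite -!mulmxA -!rowsubE.
have /submxP [z] := submx_trans (submxMl w (row_mx F G)) span_h.
by rewrite !mul_mx_row => /eq_row_mx [-> ->]; exists z.
Qed.

End Parametrisations.

Definition reduce (R : realType) (l n : nat) (S : set ('rV[R]_n * 'rV[R]_n))
    (E : 'M[R]_(l, n)) : set ('rV[R]_n * 'rV[R]_n) :=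
  fun p => in_kerE E p.2 /\ exists mu : 'rV_l, S (p.1 + mu *m E, p.2).

Section Reduction.
Variables (R : realType) (m n l q : nat) (S : set ('rV[R]_n * 'rV[R]_n)).
Variables (F G : 'M[R]_(m, n)) (E : 'M[R]_(l, n)) (Z : 'M[R]_(q, m)).
Hypotheses (SFG : spanned_by S F G) (dirS : dirac S).
Hypothesis Z_ker : (Z == kermx (G *m E^T))%MS.

Definition reduced_fmx : 'M[R]_(q + l, n) := col_mx (Z *m F) E.
Definition reduced_emx : 'M[R]_(q + l, n) := col_mx (Z *m G) 0.

Let ZN : Z *m (G *m E^T) = 0.
Proof. by apply/sub_kermxP; case/andP: Z_ker. Qed.

Let kermx_sub_Z p (X : 'M[R]_(p, m)) : X *m (G *m E^T) = 0 -> exists W, X = W *m Z.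
Proof.
move/sub_kermxP => XN; apply/submxP.
by apply: submx_trans XN _; case/andP: Z_ker.
Qed.

Lemma reduce_spanned : spanned_by (reduce S E) reduced_fmx reduced_emx.
Proof.
move=> [f e]; split.
  case=> /= kerE [mu /SFG [z [Ef Ee]]]; subst e.
  have [W zW] : exists W, z = W *m Z by apply/kermx_sub_Z/in_kerE_mul.
  exists (row_mx W (- mu)); rewrite !mul_row_col mulmx0 addr0 !mulmxA -zW.
  by rewrite -Ef mulNmx addrK.
case=> w [-> ->]; rewrite -[w]hsubmxK !mul_row_col mulmx0 addr0; split => /=.
  by apply/in_kerE_mul; rewrite -mulmxA ZN mulmx0.
by exists (- rsubmx w); apply/SFG; exists (lsubmx w *m Z); rewrite mulNmx addrK !mulmxA.
Qed.

Lemma reduced_isotropic :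
  reduced_fmx *m reduced_emx^T + reduced_emx *m reduced_fmx^T = 0.
Proof.
rewrite !tr_col_mx !mul_col_row add_block_mx trmx0 !mulmx0 !mul0mx.
have isoZ : Z *m F *m (Z *m G)^T + Z *m G *m (Z *m F)^T = 0.
  rewrite !trmx_mul !mulmxA -!(mulmxA Z) -mulmxDr -mulmxDl.
  by rewrite (dirac_isotropic SFG dirS) mul0mx mulmx0.
have EZ : E *m (Z *m G)^T = 0 by rewrite mul_trmx_mulmx ZN trmx0.
by rewrite isoZ EZ !add0r -mulmxA ZN block_mx0.
Qed.

Lemma reduce_max (f e : 'rV_n) :
  f *m reduced_emx^T + e *m reduced_fmx^T = 0 -> reduce S E (f, e).
Proof.
rewrite !tr_col_mx !mul_mx_row add_row_mx -row_mx0 trmx0 mulmx0 add0r.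
move=> /eq_row_mx [orthZ Ee].
have kerE : in_kerE E e by rewrite /in_kerE -[E]trmxK -trmx_mul Ee trmx0.
set N := G *m E^T; set w := f *m G^T + e *m F^T.
(* [w] is orthogonal to the rows of [Z], which span the left kernel of [N];
   hence [w] lies in the row space of [N^T] = [E G^T], and this yields [mu]. *)
have wZ : w *m Z^T = 0 by rewrite /w mulmxDl -!mulmxA -!trmx_mul.
set K := (cokermx N^T)^T.
have [W KW] : exists W, K = W *m Z.
  by apply: kermx_sub_Z; rewrite -[N in _ *m N]trmxK -trmx_mul mulmx_coker trmx0.
have /submxP [mu wmu] : (w <= N^T)%MS.
  by rewrite submxE -[cokermx _]trmxK -/K KW trmx_mul mulmxA wZ mul0mx.
split => //; exists (- mu); apply: dirac_max SFG dirS _.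
by rewrite mulmxDl addrAC -/w wmu mulNmx mulNmx /N trmx_mul trmxK mulmxA subrr.
Qed.

Lemma reduce_dirac : dirac (reduce S E).
Proof.
apply: spanned_dirac reduce_spanned reduced_isotropic _ => f e.
exact: reduce_max.
Qed.

Lemma reduced_rank : \rank (row_mx reduced_fmx reduced_emx) = n.
Proof.
apply: lagrangian_rank reduced_isotropic _ => f e /reduce_max /reduce_spanned.
by case=> w [-> ->]; exists w.
Qed.

End Reduction.

Section MatrixContinuity.
Variables (R : realType) (T : topologicalType) (x : T).

Lemma eq_continuous_at (V : topologicalType) (f g : T -> V) :
  f =1 g -> {for x, continuous g} -> {for x, continuous f}.
Proof. by move=> /funext ->. Qed.

Lemma continuous_pair (U W : topologicalType) (f : T -> U) (g : T -> W) :
  {for x, continuous f} -> {for x, continuous g} ->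
  {for x, continuous (fun y => (f y, g y))}.
Proof. exact: (@cvg_pair _ _ _ (nbhs x) (nbhs (f x)) (nbhs (g x))). Qed.

Lemma mx_continuousP p q (A : T -> 'M[R]_(p, q)) :
  {for x, continuous A} <-> forall i j, {for x, continuous (fun y => A y i j)}.
Proof.
split=> [cA i j | cA V [P PV sPV]].
  exact: continuous_comp cA (@coord_continuous R p q i j (A x)).
have : \forall y \near x, forall i j, P i j (A y i j).
  by apply: filter_forall => i; apply: filter_forall => j; exact: cA i j _ (PV i j).
by apply: filterS => y Py; apply: sPV.
Qed.

Lemma continuous_big (I : Type) (r : seq I) (P : pred I) (op : R -> R -> R) idx
    (f : I -> T -> R) :
  continuous (fun z : R * R => op z.1 z.2) ->
  (forall i, {for x, continuous (f i)}) ->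
  {for x, continuous (fun y => \big[op/idx]_(i <- r | P i) f i y)}.
Proof. by move=> cop cf; apply: cvg_big => // i _; exact: cf. Qed.

Lemma continuous_mulmx p q s (A : T -> 'M[R]_(p, q)) (B : T -> 'M[R]_(q, s)) :
  {for x, continuous A} -> {for x, continuous B} ->
  {for x, continuous (fun y => A y *m B y)}.
Proof.
move=> /mx_continuousP cA /mx_continuousP cB; apply/mx_continuousP => i j.
apply: (@eq_continuous_at _ _ (fun y => \sum_k A y i k * B y k j)) => [y|].
  by rewrite mxE.
apply: continuous_big => [|k]; first exact: add_continuous.
exact: cvgM (cA i k) (cB k j).
Qed.

Lemma continuous_trmx p q (A : T -> 'M[R]_(p, q)) :
  {for x, continuous A} -> {for x, continuous (fun y => (A y)^T)}.
Proof.
move=> /mx_continuousP cA; apply/mx_continuousP => i j.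
by apply: (@eq_continuous_at _ _ (fun y => A y j i)) => [y|]; rewrite ?mxE.
Qed.

Lemma continuous_mxsub p q p' q' (f : 'I_p' -> 'I_p) (g : 'I_q' -> 'I_q)
    (A : T -> 'M[R]_(p, q)) :
  {for x, continuous A} -> {for x, continuous (fun y => mxsub f g (A y))}.
Proof.
move=> /mx_continuousP cA; apply/mx_continuousP => i j.
by apply: (@eq_continuous_at _ _ (fun y => A y (f i) (g j))) => [y|]; rewrite ?mxE.
Qed.

Lemma continuous_col_mx p1 p2 q (A : T -> 'M[R]_(p1, q)) (B : T -> 'M[R]_(p2, q)) :
  {for x, continuous A} -> {for x, continuous B} ->
  {for x, continuous (fun y => col_mx (A y) (B y))}.
Proof.
move=> /mx_continuousP cA /mx_continuousP cB; apply/mx_continuousP => i j.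
rewrite -[i]fintype.splitK; case: (fintype.split i) => i' /=.
  by apply: (@eq_continuous_at _ _ (fun y => A y i' j)) => [y|]; rewrite ?col_mxEu.
by apply: (@eq_continuous_at _ _ (fun y => B y i' j)) => [y|]; rewrite ?col_mxEd.
Qed.

Lemma continuous_row_mx p q1 q2 (A : T -> 'M[R]_(p, q1)) (B : T -> 'M[R]_(p, q2)) :
  {for x, continuous A} -> {for x, continuous B} ->
  {for x, continuous (fun y => row_mx (A y) (B y))}.
Proof.
move=> cA cB; apply: (@eq_continuous_at _ _ (fun y => (col_mx (A y)^T (B y)^T)^T)).
  by move=> y; rewrite tr_col_mx !trmxK.
by apply/continuous_trmx/continuous_col_mx; exact: continuous_trmx.
Qed.

Lemma continuous_det p (A : T -> 'M[R]_p) :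
  {for x, continuous A} -> {for x, continuous (fun y => \det (A y))}.
Proof.
move=> /mx_continuousP cA; apply: continuous_big => [|s]; first exact: add_continuous.
apply: cvgM; first exact: cvg_cst.
by apply: continuous_big => [|i]; [exact: mul_continuous | exact: cA].
Qed.

Lemma continuous_adj p (A : T -> 'M[R]_p) :
  {for x, continuous A} -> {for x, continuous (fun y => \adj (A y))}.
Proof.
move=> cA; apply/mx_continuousP => i j.
apply: (@eq_continuous_at _ _
  (fun y => (-1) ^+ (j + i) * \det (mxsub (lift j) (lift i) (A y)))) => [y|].
  by rewrite mxE /cofactor; congr (_ * \det _); apply/matrixP => a b; rewrite !mxE.
by apply: cvgM; [exact: cvg_cst | apply/continuous_det/continuous_mxsub].
Qed.

Lemma continuous_minor_coker l m r (N : T -> 'M[R]_(m, l))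
    (f : 'I_r -> 'I_m) (g : 'I_r -> 'I_l) :
  {for x, continuous N} -> {for x, continuous (fun y => minor_coker (N y) f g)}.
Proof.
move=> cN; have cA := continuous_mxsub (f := f) (g := g) cN.
apply: cvgB; first by apply: cvgZ; [exact: continuous_det | exact: cvg_cst].
apply: continuous_mulmx; last exact: cvg_cst.
by apply: continuous_mulmx; [exact: continuous_mxsub | exact: continuous_adj].
Qed.

Lemma continuous_mx_fst_snd m n (L : T -> 'rV[R]_m -> 'rV[R]_n * 'rV[R]_n) :
  (forall z, {for x, continuous (fun y => L y z)}) ->
  {for x, continuous (fun y => mx_fst (L y))} /\
  {for x, continuous (fun y => mx_snd (L y))}.
Proof.
move=> cL; split; apply/mx_continuousP => i j.
  apply: (@eq_continuous_at _ _ (fun y => (L y (delta_mx 0 i)).1 0 j)) => [y|].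
    by rewrite mxE.
  apply: (@continuous_comp _ _ _ _ (fun p : 'rV[R]_n * 'rV[R]_n => p.1 0 j) _ (cL _)).
  exact: (@continuous_comp _ _ _ fst (fun M : 'rV[R]_n => M 0 j) _ cvg_fst
    (@coord_continuous R 1 n 0 j _)).
apply: (@eq_continuous_at _ _ (fun y => (L y (delta_mx 0 i)).2 0 j)) => [y|].
  by rewrite mxE.
apply: (@continuous_comp _ _ _ _ (fun p : 'rV[R]_n * 'rV[R]_n => p.2 0 j) _ (cL _)).
exact: (@continuous_comp _ _ _ snd (fun M : 'rV[R]_n => M 0 j) _ cvg_snd
  (@coord_continuous R 1 n 0 j _)).
Qed.

End MatrixContinuity.

Lemma continuous_interior (T U : topologicalType) (A : set T) (f : T -> U) :
  {within A, continuous f} -> forall y, A° y -> {for y, continuous f}.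
Proof.
move=> cA; have : {within A°, continuous f}.
  exact: continuous_subspaceW (@interior_subset _ A) cA.
rewrite continuous_open_subspace; last exact: open_interior.
by move=> cAo y Ay; apply: cAo; rewrite inE.
Qed.

Lemma near_minor (R : realType) (T : topologicalType) (p q r : nat)
    (M : T -> 'M[R]_(p, q)) x :
  {for x, continuous M} -> \rank (M x) = r ->
  exists (f : 'I_r -> 'I_p) (g : 'I_r -> 'I_q),
    \forall y \near x, \det (mxsub f g (M y)) != 0.
Proof.
move=> cM /mxrank_minor [f [g minor_fg]]; exists f, g.
have cdet := continuous_det (continuous_mxsub (f := f) (g := g) cM).
apply: (cdet [set a | a != 0]); apply: open_nbhs_nbhs.
by split; [exact: open_neq | exact: minor_fg].
Qed.

Lemma local_kermx_frame (R : realType) (T : topologicalType) (m l r : nat)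
    (V : set T) (N : T -> 'M[R]_(m, l)) x :
  V x -> (forall y, V y -> \rank (N y) = r) ->
  (forall y, V y -> {for y, continuous N}) ->
  exists Z : T -> 'M[R]_m, (forall y, V y -> {for y, continuous Z}) /\
    \forall y \near x, V y -> (Z y == kermx (N y))%MS.
Proof.
move=> Vx rkN cN; have [f [g near_fg]] := near_minor (cN x Vx) (rkN x Vx).
exists (fun y => minor_coker (N y) f g); split=> [y Vy|].
  exact: continuous_minor_coker (cN y Vy).
by apply: filterS near_fg => y fg Vy; apply: minor_coker_eqmx fg _; rewrite rkN.
Qed.

Section LocalFrame.
Variables (R : realType) (T : topologicalType) (m n l r : nat).
Variables (V : set T) (D : T -> set ('rV[R]_n * 'rV[R]_n)).
Variables (F G : T -> 'M[R]_(m, n)) (E : T -> 'M[R]_(l, n)).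
Hypothesis oV : open V.
Hypothesis DFG : forall y, V y -> spanned_by (D y) (F y) (G y).
Hypothesis dirD : forall y, V y -> dirac (D y).
Hypothesis rkN : forall y, V y -> \rank (G y *m (E y)^T) = r.
Hypothesis cF : forall y, V y -> {for y, continuous F}.
Hypothesis cG : forall y, V y -> {for y, continuous G}.
Hypothesis cE : forall y, V y -> {for y, continuous E}.

Lemma reduce_local_frame x : V x ->
  exists W, [/\ nbhs x W, W `<=` V &
    exists Tr : T -> 'rV_n -> 'rV_n * 'rV_n,
      (forall y, W y -> lin_bij_onto (Tr y) (reduce (D y) (E y))) /\
      (forall z, {within W, continuous (fun y => Tr y z)})].
Proof.
move=> Vx; pose N y := G y *m (E y)^T.
have cN y : V y -> {for y, continuous N}.
  by move=> Vy; exact: continuous_mulmx (cG Vy) (continuous_trmx (cE Vy)).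
have [Z [cZ near_Z]] := local_kermx_frame Vx rkN cN.
pose Bf y := reduced_fmx (F y) (E y) (Z y); pose Be y := reduced_emx l (G y) (Z y).
have cBf y : V y -> {for y, continuous Bf}.
  move=> Vy; apply: continuous_col_mx (cE Vy).
  exact: continuous_mulmx (cZ y Vy) (cF Vy).
have cBe y : V y -> {for y, continuous Be}.
  move=> Vy; apply: continuous_col_mx (cvg_cst _).
  exact: continuous_mulmx (cZ y Vy) (cG Vy).
have Zx := nbhs_singleton near_Z Vx.
have [h [c near_hc]] := near_minor (continuous_row_mx (cBf x Vx) (cBe x Vx))
  (reduced_rank (DFG Vx) (dirD Vx) Zx).
exists [set y | [/\ V y, (Z y == kermx (N y))%MS &
                    \det (mxsub h c (row_mx (Bf y) (Be y))) != 0]]; split.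
- have nearV : \forall y \near x, V y by apply: open_nbhs_nbhs.
  apply: filterS (filterI nearV (filterI near_Z near_hc)) => y [Vy [Zy hc]].
  by split=> //; exact: Zy.
- by move=> y [].
exists (fun y z => (z *m rowsub h (Bf y), z *m rowsub h (Be y))); split.
  move=> y [Vy Zy hc]; apply: minor_lin_bij_onto hc.
    exact: reduce_spanned (DFG Vy) Zy.
  by rewrite (reduced_rank (DFG Vy) (dirD Vy) Zy).
move=> z; apply: continuous_in_subspaceT => y /[1!inE] [[Vy _ _]].
apply: (continuous_pair (f := fun y => z *m rowsub h (Bf y)));
  apply: continuous_mulmx (cvg_cst _) (continuous_mxsub _); [exact: cBf | exact: cBe].
Qed.

End LocalFrame.

Unset Implicit Arguments.

Theorem propositionA2 (R : realType) (k l n : nat) (U : set 'rV[R]_k)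
    (D : 'rV[R]_k -> set ('rV[R]_n * 'rV[R]_n)) (E : 'rV[R]_k -> 'M[R]_(l, n)) :
  open U ->
  modulated_dirac U D ->
  {within U, continuous E} ->
  (exists d : nat, forall x, U x ->
     has_dim (D x `&` [set p | in_kerE (E x) p.2]) d) ->
  modulated_dirac U (reduced_dirac D E).
Proof.
move=> oU modD cE [d dimK] x Ux.
have [dirDx [Ux' [nUx sUx [T [Tbij Tc]]]]] := modD x Ux.
pose F y := mx_fst (T y); pose G y := mx_snd (T y).
have DFG y : Ux' y -> spanned_by (D y) (F y) (G y) /\ row_free (row_mx (F y) (G y)).
  by move=> /Tbij /lin_bij_onto_mx.
have VU : Ux'° `<=` U by move=> y /interior_subset /sUx.
have cFG y : Ux'° y -> {for y, continuous F} /\ {for y, continuous G}.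
  move=> Vy; apply: continuous_mx_fst_snd => z.
  exact: continuous_interior (Tc z) _ Vy.
have cEU y : U y -> {for y, continuous E}.
  by move: cE; rewrite continuous_open_subspace // => cE' Uy; apply: cE'; rewrite inE.
split.
  have [SFG _] := DFG x (nbhs_singleton nUx).
  apply: (reduce_dirac (Z := kermx (G x *m (E x)^T)) SFG dirDx).
  by rewrite submx_refl.
have rkN y : Ux'° y -> \rank (G y *m (E y)^T) = (n - d)%N.
  move=> Vy; have [SFG freeFG] := DFG y (interior_subset Vy).
  exact: has_dim_kerE SFG freeFG (dimK y (VU y Vy)).
have [W [nW sWV frame]] := reduce_local_frame (open_interior Ux')
  (fun y Vy => (DFG y (interior_subset Vy)).1) (fun y Vy => (modD y (VU y Vy)).1) rkN
  (fun y Vy => (cFG y Vy).1) (fun y Vy => (cFG y Vy).2) (fun y Vy => cEU y (VU y Vy)) nUx.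
by exists W; split=> //; exact: subset_trans sWV VU.
Qed.
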